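(* Let $(Y,d)$ be a locally compact Hadamard space, $\Lambda$ a group acting properly and co-compactly by isometries on $Y$, and $y\in Y$ a reference point. Then for any conjugate finite lists $(a_i)_{1\le i\le N}$, $(b_i)_{1\le i\le N}$ in $\Lambda$ there exists $g\in\Lambda$ with $b_i=g^{-1}a_ig$ for all $i$ such that $$d_y(g,e)\leqslant C_\star\sum_{i=1}^N\big(d_y(a_i,e)+d_y(b_i,e)\big)+C,$$ where $d_y(g,h)=d(g\cdot y,h\cdot y)$ and the constants $C_\star,C$ depend only on the conjugacy class of the list $(a_i)$ (and on $y$).
   Context: A Hadamard space is a complete metric space $(Y,d)$ such that any two points are joined by a curve whose length equals their distance (a geodesic), and for any points $P,Q,R$ and $0\le\lambda\le1$, the point $Q_\lambda$ on the geodesic from $Q$ to $R$ with $d(Q_\lambda,Q)=\lambda d(Q,R)$ satisfies $d(P,Q_\lambda)^2\le(1-\lambda)d(P,Q)^2+\lambda d(P,R)^2-\lambda(1-\lambda)d(Q,R)^2$. Proper action: each $y$ has $r>0$ with $\{g: gB(y,r)\cap B(y,r)\ne\varnothing\}$ finite; co-compact: $Y/\Lambda$ compact. Lists are conjugate if some $g\in\Lambda$ satisfies $b_i=g^{-1}a_ig$ for all $i$. *)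

From Stdlib Require Import Reals List.
Import ListNotations.
Open Scope R_scope.

Section MetricDefs.
Variable Y : Type.
Variable d : Y -> Y -> R.

Definition is_metric : Prop :=
  (forall x y, 0 <= d x y) /\ (forall x y, d x y = 0 <-> x = y) /\
  (forall x y, d x y = d y x) /\ (forall x y z, d x z <= d x y + d y z).

Definition ball (x : Y) (r : R) : Y -> Prop := fun z => d x z < r.

Definition open_set (U : Y -> Prop) : Prop :=
  forall x, U x -> exists eps, 0 < eps /\ forall z, d x z < eps -> U z.

Definition compact_set (K : Y -> Prop) : Prop :=
  forall (I : Type) (U : I -> Y -> Prop),
    (forall i, open_set (U i)) ->
    (forall x, K x -> exists i, U i x) ->
    exists l : list I, forall x, K x -> exists i, In i l /\ U i x.

Definition locally_compact : Prop :=
  forall x, exists K : Y -> Prop, compact_set K /\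
    exists r, 0 < r /\ forall z, d x z < r -> K z.

Definition complete : Prop :=
  forall u : nat -> Y,
    (forall eps, 0 < eps -> exists N, forall m n, (N <= m)%nat -> (N <= n)%nat ->
        d (u m) (u n) < eps) ->
    exists l, forall eps, 0 < eps -> exists N, forall n, (N <= n)%nat -> d (u n) l < eps.

Definition geodesic (x y : Y) (c : R -> Y) : Prop :=
  c 0 = x /\ c 1 = y /\
  forall s t, 0 <= s <= 1 -> 0 <= t <= 1 -> d (c s) (c t) = Rabs (s - t) * d x y.

Definition hadamard : Prop :=
  is_metric /\ complete /\
  (forall x y, exists c, geodesic x y c) /\
  (forall P Q R' (c : R -> Y) lam, geodesic Q R' c -> 0 <= lam <= 1 ->
     (d P (c lam))^2 <= (1 - lam) * (d P Q)^2 + lam * (d P R')^2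
                         - lam * (1 - lam) * (d Q R')^2).
End MetricDefs.

Section GroupDefs.
Variable G : Type.
Variable mul : G -> G -> G.
Variable inv : G -> G.
Variable e : G.

Definition is_group : Prop :=
  (forall a b c, mul a (mul b c) = mul (mul a b) c) /\
  (forall a, mul e a = a) /\ (forall a, mul a e = a) /\
  (forall a, mul (inv a) a = e) /\ (forall a, mul a (inv a) = e).

Definition conjg (g a : G) : G := mul (inv g) (mul a g).

Definition conj_lists (a b : list G) : Prop :=
  exists g, b = map (conjg g) a.

Variable Y : Type.
Variable d : Y -> Y -> R.
Variable act : G -> Y -> Y.

Definition isometric_action : Prop :=
  (forall x, act e x = x) /\
  (forall g h x, act (mul g h) x = act g (act h x)) /\
  (forall g x z, d (act g x) (act g z) = d x z).

Definition proper_action : Prop :=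
  forall x, exists r, 0 < r /\ exists l : list G,
    forall g, (exists z, ball Y d x r z /\ ball Y d x r (act g z)) -> In g l.

(* Y / G compact for the quotient topology: open sets of Y/G are exactly the
   G-invariant open subsets of Y *)
Definition cocompact_action : Prop :=
  forall (I : Type) (U : I -> Y -> Prop),
    (forall i, open_set Y d (U i)) ->
    (forall i g x, U i x -> U i (act g x)) ->
    (forall x, exists i, U i x) ->
    exists l : list I, forall x, exists i, In i l /\ U i x.

Definition dy (y : Y) (g h : G) : R := d (act g y) (act h y).
End GroupDefs.

Fixpoint sumR (l : list R) : R :=
  match l with [] => 0 | x :: t => x + sumR t end.

From Stdlib Require Import Reals List Lra Lia Classical.
Import ListNotations.
Open Scope R_scope.

(* Fix a list a = (a_1, ..., a_N) in Λ and its displacement function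
   F_a(p) = Σ_i d(p, a_i·p).  By the CAT(0) inequality the distance between two
   geodesics is convex in the parameter, so F_a is convex along geodesics; it is
   also invariant under the centraliser Z(a).  Properness and co-compactness
   give finitely many "small" balls whose translates cover Y.  Consequently
   orbits are coarsely dense and, walking along a geodesic through overlapping
   translates, each set {g | d(y, g·y) <= K} is finite.  Hence conjugators with
   bounded displacement lie near Z(a), i.e. sublevel sets of F_a lie in bounded
   neighbourhoods of Z(a)·y, and convexity turns this into the linear estimate
   d(p, Z(a)·y) <= L F_a(p) + L.  For a' = h⁻¹ a h and b' = k⁻¹ a k, F_a(h·y)
   and F_a(k·y) are the displacement sums of a' and b' at y, and the conjugator
   h⁻¹ z₀ z₁⁻¹ k, with z₀, z₁ ∈ Z(a) close to h·y and k·y, satisfies the bound. *)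

Lemma le_of_sq_le a b : 0 <= a -> 0 <= b -> a ^ 2 <= b ^ 2 -> a <= b.
Proof. intros. nra. Qed.

Lemma list_max {X : Type} (l : list X) (f : X -> R) :
  exists M, forall x, In x l -> f x <= M.
Proof.
  induction l as [|x l [M HM]].
  - exists 0. intros _ [].
  - exists (Rmax (f x) M). intros z [<-|Hz].
    + apply Rmax_l.
    + eapply Rle_trans; [apply HM, Hz | apply Rmax_r].
Qed.

Lemma list_min_pos {X : Type} (l : list X) (f : X -> R) :
  (forall x, In x l -> 0 < f x) -> exists eps, 0 < eps /\ forall x, In x l -> eps <= f x.
Proof.
  induction l as [|x l IH]; intros Hpos.
  - exists 1. split; [lra | intros _ []].
  - destruct IH as [eps [Heps Hle]]; [intros; apply Hpos; right; auto|].
    exists (Rmin eps (f x)). split; [apply Rmin_pos; auto; apply Hpos; left; auto|].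
    intros z [<-|Hz]; [apply Rmin_r | eapply Rle_trans; [apply Rmin_l | auto]].
Qed.

Lemma fin_union {X Z : Type} (l : list X) (P : X -> Z -> Prop) :
  (forall x, In x l -> exists L, forall z, P x z -> In z L) ->
  exists L, forall x, In x l -> forall z, P x z -> In z L.
Proof.
  induction l as [|x l IH]; intros Hfin.
  - exists nil. intros _ [].
  - destruct (Hfin x (or_introl eq_refl)) as [L1 H1].
    destruct IH as [L2 H2]; [intros; apply Hfin; right; auto|].
    exists (L1 ++ L2). intros w [<-|Hw] z Hz; apply in_or_app; [left | right]; eauto.
Qed.

Fixpoint lists_over {X : Type} (L : list X) (n : nat) : list (list X) :=
  match n with
  | O => [nil]
  | S n => flat_map (fun x => map (cons x) (lists_over L n)) L
  end.

Lemma lists_over_in {X : Type} (L l : list X) :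
  (forall x, In x l -> In x L) -> In l (lists_over L (length l)).
Proof.
  induction l as [|x l IH]; intros Hsub; simpl; auto.
  apply in_flat_map. exists x. split; [apply Hsub; left; auto|].
  apply in_map, IH. intros; apply Hsub; right; auto.
Qed.

Lemma bounded_realisers {X Z : Type} (cs : list X) (P : Z -> X -> Prop) (f : Z -> R) :
  exists M, forall c, In c cs -> forall h, P h c -> exists h', P h' c /\ f h' <= M.
Proof.
  induction cs as [|c cs [M HM]].
  - exists 0. intros _ [].
  - destruct (classic (exists h, P h c)) as [[h0 Hh0]|Hnone].
    + exists (Rmax (f h0) M). intros c' [<-|Hc] h Hh.
      * exists h0. split; [exact Hh0 | apply Rmax_l].
      * destruct (HM c' Hc h Hh) as [h' [Ph' Hle]].
        exists h'. split; [exact Ph' | eapply Rle_trans; [exact Hle | apply Rmax_r]].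
    + exists M. intros c' [<-|Hc] h Hh; [exfalso; eauto | eauto].
Qed.

Lemma map_fix {X : Type} (f : X -> X) (l : list X) (x : X) :
  map f l = l -> In x l -> f x = x.
Proof.
  induction l as [|b l IH]; simpl; intros Hfix Hin; [contradiction|].
  injection Hfix as Hb Hl. destruct Hin as [<-|Hin]; auto.
Qed.

Lemma sumR_combine {X : Type} (f : X -> R) (l1 l2 : list X) : length l1 = length l2 ->
  sumR (map (fun p => f (fst p) + f (snd p)) (combine l1 l2))
  = sumR (map f l1) + sumR (map f l2).
Proof.
  revert l2. induction l1 as [|x l1 IH]; intros [|x2 l2] Hlen; simpl in *; try lia; try lra.
  rewrite IH by lia. lra.
Qed.

Section HadamardAction.
Variables (Y : Type) (d : Y -> Y -> R).
Hypothesis Hmet : is_metric Y d.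

Lemma d_nonneg x z : 0 <= d x z. Proof. apply Hmet. Qed.
Lemma d_refl x : d x x = 0. Proof. apply Hmet; reflexivity. Qed.
Lemma d_sym x z : d x z = d z x. Proof. apply Hmet. Qed.
Lemma d_tri x z w : d x w <= d x z + d z w. Proof. apply Hmet. Qed.

Lemma geo_dist x z c s t : geodesic Y d x z c -> 0 <= s <= 1 -> 0 <= t <= 1 ->
  d (c s) (c t) = Rabs (s - t) * d x z.
Proof. intros [_ [_ H]]; apply H. Qed.

Lemma geo_rev x z c : geodesic Y d x z c -> geodesic Y d z x (fun s => c (1 - s)).
Proof.
  intros [H0 [H1 H]]. split; [|split].
  - replace (1 - 0) with 1 by ring. exact H1.
  - replace (1 - 1) with 0 by ring. exact H0.
  - intros s t Hs Ht. rewrite H by lra. rewrite d_sym.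
    replace (1 - s - (1 - t)) with (- (s - t)) by ring. rewrite Rabs_Ropp. reflexivity.
Qed.

Lemma geo_from_start x z c t : geodesic Y d x z c -> 0 <= t <= 1 ->
  d (c t) x = t * d x z.
Proof.
  intros Hc Ht. assert (H0 : c 0 = x) by (destruct Hc; assumption). rewrite <- H0 at 1.
  rewrite (geo_dist x z c t 0 Hc) by lra. rewrite Rminus_0_r, Rabs_pos_eq by lra. reflexivity.
Qed.

Lemma geo_to_end x z c t : geodesic Y d x z c -> 0 <= t <= 1 ->
  d (c t) z = (1 - t) * d x z.
Proof.
  intros Hc Ht. assert (H1 : c 1 = z) by (destruct Hc as [_ [H1 _]]; exact H1). rewrite <- H1 at 1.
  rewrite (geo_dist x z c t 1 Hc) by lra. rewrite Rabs_minus_sym, Rabs_pos_eq by lra. reflexivity.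
Qed.

Lemma frac_unit (m N : nat) : (0 < N)%nat -> (m <= N)%nat -> 0 <= INR m / INR N <= 1.
Proof.
  intros HN Hm. apply lt_0_INR in HN. apply le_INR in Hm. pose proof (pos_INR m).
  assert (Hinv : 0 < / INR N) by (apply Rinv_0_lt_compat; lra).
  unfold Rdiv. split; [nra|].
  rewrite <- (Rinv_r (INR N)) by lra. apply Rmult_le_compat_r; lra.
Qed.

Lemma geo_subdivision x z c (N k : nat) : geodesic Y d x z c -> (0 < N)%nat -> (k < N)%nat ->
  d (c (INR k / INR N)) (c (INR (S k) / INR N)) = d x z / INR N.
Proof.
  intros Hc HN Hk. pose proof (lt_0_INR _ HN) as HNr.
  rewrite (geo_dist x z c _ _ Hc) by (apply frac_unit; lia).
  replace (INR k / INR N - INR (S k) / INR N) with (- / INR N) by (rewrite S_INR; field; lra).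
  rewrite Rabs_Ropp, Rabs_pos_eq by (left; apply Rinv_0_lt_compat; lra).
  unfold Rdiv. ring.
Qed.

Hypothesis Hgeo : forall x z, exists c, geodesic Y d x z c.
Hypothesis Hcat : forall P Q R' (c : R -> Y) lam, geodesic Y d Q R' c -> 0 <= lam <= 1 ->
  (d P (c lam))^2 <= (1 - lam) * (d P Q)^2 + lam * (d P R')^2
                     - lam * (1 - lam) * (d Q R')^2.

(* Two geodesics issued from a common point: comparison with a Euclidean
   triangle, obtained by applying the CAT(0) inequality twice. *)
Lemma convex_common_start p q q' c c' t :
  geodesic Y d p q c -> geodesic Y d p q' c' -> 0 <= t <= 1 ->
  d (c t) (c' t) <= t * d q q'.
Proof.
  intros Hc Hc' Ht.
  pose proof (Hcat (c t) p q' c' t Hc' Ht) as Hcat1.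
  pose proof (Hcat q' p q c t Hc Ht) as Hcat2.
  rewrite (geo_from_start p q c t Hc Ht) in Hcat1.
  rewrite (d_sym q' p), (d_sym q' q), (d_sym q' (c t)) in Hcat2.
  pose proof (d_nonneg (c t) (c' t)). pose proof (d_nonneg q q').
  assert (Hweighted : t * d (c t) q' ^ 2 <=
            t * ((1 - t) * d p q' ^ 2 + t * d q q' ^ 2 - t * (1 - t) * d p q ^ 2))
    by (apply Rmult_le_compat_l; lra).
  apply le_of_sq_le; [assumption | nra | lra].
Qed.

(* Convexity of the distance between two geodesics, through a geodesic
   joining the start of one to the end of the other. *)
Lemma convex_dist p q p' q' c c' t :
  geodesic Y d p q c -> geodesic Y d p' q' c' -> 0 <= t <= 1 ->
  d (c t) (c' t) <= (1 - t) * d p p' + t * d q q'.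
Proof.
  intros Hc Hc' Ht. destruct (Hgeo p q') as [c'' Hc''].
  pose proof (convex_common_start p q q' c c'' t Hc Hc'' Ht) as Hnear.
  pose proof (convex_common_start q' p p' _ _ (1 - t)
                (geo_rev _ _ _ Hc'') (geo_rev _ _ _ Hc') ltac:(lra)) as Hfar.
  cbv beta in Hfar. replace (1 - (1 - t)) with t in Hfar by ring.
  pose proof (d_tri (c t) (c'' t) (c' t)). lra.
Qed.

Variables (G : Type) (mul : G -> G -> G) (inv : G -> G) (e : G).
Hypothesis Hgrp : is_group G mul inv e.

Notation conj := (conjg G mul inv).

Lemma massoc a b c : mul a (mul b c) = mul (mul a b) c. Proof. apply Hgrp. Qed.
Lemma mel a : mul e a = a. Proof. apply Hgrp. Qed.
Lemma mer a : mul a e = a. Proof. apply Hgrp. Qed.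
Lemma minvl a : mul (inv a) a = e. Proof. apply Hgrp. Qed.
Lemma minvr a : mul a (inv a) = e. Proof. apply Hgrp. Qed.

Lemma inv_uniq a b : mul a b = e -> b = inv a.
Proof. intro H. rewrite <- (mel b), <- (minvl a), <- massoc, H, mer. reflexivity. Qed.

Lemma inv_mul a b : inv (mul a b) = mul (inv b) (inv a).
Proof.
  symmetry; apply inv_uniq. rewrite <- massoc, (massoc b), minvr, mel, minvr. reflexivity.
Qed.

Lemma inv_inv a : inv (inv a) = a.
Proof. symmetry; apply inv_uniq, minvl. Qed.

Lemma inv_e : inv e = e.
Proof. symmetry; apply inv_uniq, mel. Qed.

Lemma conjg_mul z w x : conj (mul z w) x = conj w (conj z x).
Proof. unfold conjg. rewrite inv_mul, !massoc. reflexivity. Qed.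

Lemma conjg_inv g x : conj (inv g) (conj g x) = x.
Proof.
  unfold conjg. rewrite inv_inv, !massoc, minvr, mel, <- massoc, minvr, mer. reflexivity.
Qed.

Lemma conjg_e x : conj e x = x.
Proof. unfold conjg. rewrite inv_e, mel, mer. reflexivity. Qed.

Variable act : G -> Y -> Y.
Hypothesis Hact : isometric_action G mul e Y d act.

Lemma act_e x : act e x = x. Proof. apply Hact. Qed.
Lemma act_mul g h x : act (mul g h) x = act g (act h x). Proof. apply Hact. Qed.
Lemma act_iso g x z : d (act g x) (act g z) = d x z. Proof. apply Hact. Qed.

Lemma act_inv_r g x : act g (act (inv g) x) = x.
Proof. rewrite <- act_mul, minvr, act_e. reflexivity. Qed.

Lemma d_act_inv g p q : d (act (inv g) p) q = d p (act g q).
Proof. rewrite <- (act_iso g), act_inv_r. reflexivity. Qed.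

Lemma d_conj h ai y : d y (act (conj h ai) y) = d (act h y) (act ai (act h y)).
Proof.
  unfold conjg. rewrite !act_mul, d_sym, d_act_inv, d_sym. reflexivity.
Qed.

Lemma geo_act g x z c : geodesic Y d x z c ->
  geodesic Y d (act g x) (act g z) (fun s => act g (c s)).
Proof.
  intros [H0 [H1 H]]. split; [|split].
  - simpl. rewrite H0. reflexivity.
  - simpl. rewrite H1. reflexivity.
  - intros. rewrite !act_iso. auto.
Qed.

Definition displacement (a : list G) (p : Y) : R := sumR (map (fun ai => d p (act ai p)) a).

Lemma displacement_nonneg a p : 0 <= displacement a p.
Proof.
  induction a as [|ai a IH]; unfold displacement in *; simpl; [lra|].
  pose proof (d_nonneg p (act ai p)). lra.
Qed.

Lemma displacement_term a ai p : In ai a -> d p (act ai p) <= displacement a p.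
Proof.
  induction a as [|b a IH]; unfold displacement in *; simpl; intros Hin; [contradiction|].
  pose proof (displacement_nonneg a p). pose proof (d_nonneg p (act b p)).
  unfold displacement in *. destruct Hin as [<-|Hin]; [lra|]. pose proof (IH Hin). lra.
Qed.

(* Each term d(p, a_i p) is convex along geodesics: compare the geodesic c
   with its translate a_i c. *)
Lemma displacement_convex a p q c t : geodesic Y d p q c -> 0 <= t <= 1 ->
  displacement a (c t) <= (1 - t) * displacement a p + t * displacement a q.
Proof.
  intros Hc Ht. induction a as [|ai a IH]; unfold displacement in *; simpl; [lra|].
  pose proof (convex_dist p q (act ai p) (act ai q) c _ t Hc
                (geo_act ai _ _ _ Hc) Ht). lra.
Qed.

Lemma displacement_translate a h y :
  displacement a (act h y) = sumR (map (fun x => dy G Y d act y x e) (map (conj h) a)).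
Proof.
  unfold displacement. rewrite map_map. f_equal. apply map_ext. intros ai.
  unfold dy. rewrite act_e, (d_sym (act (conj h ai) y) y), d_conj. reflexivity.
Qed.

Definition centralises (a : list G) (z : G) : Prop := map (conj z) a = a.

Lemma centralises_e a : centralises a e.
Proof.
  unfold centralises. rewrite (map_ext _ (fun x => x)) by apply conjg_e.
  apply map_id.
Qed.

Lemma centralises_quotient a h h' : map (conj h) a = map (conj h') a ->
  centralises a (mul h (inv h')).
Proof.
  intros Hsame. unfold centralises.
  rewrite (map_ext _ (fun x => conj (inv h') (conj h x))) by apply conjg_mul.
  rewrite <- map_map, Hsame, map_map.
  rewrite (map_ext _ (fun x => x)) by apply conjg_inv. apply map_id.
Qed.

Lemma conj_through_centraliser a h w k : centralises a w ->
  map (conj (mul (inv h) (mul w k))) (map (conj h) a) = map (conj k) a.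
Proof.
  intros Hw. rewrite map_map. apply map_ext_in. intros ai Hai.
  rewrite <- conjg_mul, massoc, minvr, mel, conjg_mul, (map_fix _ _ _ Hw Hai).
  reflexivity.
Qed.

Lemma centraliser_commutes a z ai x : centralises a z -> In ai a ->
  act ai (act z x) = act z (act ai x).
Proof.
  intros Hz Hin. pose proof (map_fix _ _ _ Hz Hin) as Hfix. unfold conjg in Hfix.
  rewrite <- !act_mul. f_equal.
  rewrite <- Hfix at 2. rewrite !massoc, minvr, mel. reflexivity.
Qed.

Lemma displacement_centraliser a z x : centralises a z ->
  displacement a (act z x) = displacement a x.
Proof.
  intros Hz. unfold displacement. f_equal. apply map_ext_in. intros ai Hin.
  rewrite (centraliser_commutes a z ai x Hz Hin), act_iso. reflexivity.
Qed.

Hypothesis Hprop : proper_action G Y d act.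
Hypothesis Hcoc : cocompact_action G Y d act.

(* A ball B(x, r) is small when only finitely many g move some point of the
   concentric ball of radius 8r into that same ball (any factor >= 5 would do
   in [steps_between_finite]). *)
Definition small_ball (xr : Y * R) : Prop :=
  0 < snd xr /\ exists l : list G, forall g,
    (exists z, d (fst xr) z < 8 * snd xr /\ d (fst xr) (act g z) < 8 * snd xr) -> In g l.

Definition in_translate (h : G) (xr : Y * R) (p : Y) : Prop := d (act h (fst xr)) p < snd xr.

Definition step (j k : Y * R) (s : G) : Prop :=
  exists u, d (fst k) u < snd k /\ d (fst j) (act s u) < 2 * snd j.

(* Co-compactness applied to the invariant open cover by translates of small
   balls (one around each point, by properness) yields finitely many small
   balls whose translates cover Y. *)
Lemma small_ball_cover :
  exists cs : list (Y * R), (forall xr, In xr cs -> small_ball xr) /\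
    forall p, exists xr h, In xr cs /\ in_translate h xr p.
Proof.
  set (I := {xr : Y * R | small_ball xr}).
  set (U := fun (i : I) p => exists h, in_translate h (proj1_sig i) p).
  destruct (Hcoc I U) as [l Hl].
  - intros [[x r] Hsmall] p [h Hh]. unfold in_translate in Hh; simpl in *.
    exists (r - d (act h x) p). split; [lra|].
    intros z Hz. exists h. unfold in_translate; simpl. pose proof (d_tri (act h x) p z). lra.
  - intros [[x r] Hsmall] g p [h Hh]. exists (mul g h). unfold in_translate in *; simpl in *.
    rewrite act_mul, act_iso. exact Hh.
  - intros p. destruct (Hprop p) as [r [Hr [l Hl]]].
    assert (Hsmall : small_ball (p, r / 8)).
    { split; simpl; [lra|]. exists l. intros g [z [H1 H2]]. apply Hl. exists z.
      unfold ball. split; lra. }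
    exists (exist _ (p, r / 8) Hsmall), e. unfold in_translate; simpl.
    rewrite act_e, d_refl. lra.
  - exists (map (@proj1_sig _ _) l). split.
    + intros xr Hin. apply in_map_iff in Hin. destruct Hin as [[xr' Hsmall] [<- _]]. exact Hsmall.
    + intros p. destruct (Hl p) as [i [Hi [h Hh]]]. exists (proj1_sig i), h.
      split; [apply in_map, Hi | exact Hh].
Qed.

(* Between two small balls there are only finitely many steps: two steps s, s0
   differ by an element moving a point of the larger ball close to itself. *)
Lemma steps_between_finite j k : small_ball j -> small_ball k ->
  exists L, forall s, step j k s -> In s L.
Proof.
  intros [Hj [lj Hlj]] [Hk [lk Hlk]].
  destruct (classic (exists s0, step j k s0)) as [[s0 [u0 [Hu0 Hsu0]]]|Hnone].
  2:{ exists nil. intros s Hs. exfalso. apply Hnone. eauto. }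
  destruct (Rle_lt_dec (snd k) (snd j)) as [Hle|Hlt].
  - exists (map (fun w => mul w s0) lj). intros s [u [Hu Hsu]].
    apply in_map_iff. exists (mul s (inv s0)). split.
    + rewrite <- massoc, minvl, mer. reflexivity.
    + apply Hlj. exists (act s0 u0). split; [lra|].
      rewrite <- act_mul, <- massoc, minvl, mer.
      pose proof (d_tri (fst j) (act s u) (act s u0)) as Htri1.
      pose proof (d_tri u0 (fst k) u) as Htri2.
      rewrite act_iso, (d_sym u u0) in Htri1. rewrite d_sym in Hu0. lra.
  - exists (map (fun w => mul s0 w) lk). intros s [u [Hu Hsu]].
    apply in_map_iff. exists (mul (inv s0) s). split.
    + rewrite massoc, minvr, mel. reflexivity.
    + apply Hlk. exists u. split; [lra|]. rewrite act_mul.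
      pose proof (d_tri (fst k) u0 (act (inv s0) (act s u))) as Htri1.
      assert (Hmove : d u0 (act (inv s0) (act s u)) = d (act s0 u0) (act s u))
        by (rewrite d_sym, d_act_inv, d_sym; reflexivity).
      pose proof (d_tri (act s0 u0) (fst j) (act s u)) as Htri2.
      rewrite (d_sym _ (fst j)) in Htri2. lra.
Qed.

Lemma step_of_close h h' j k p p' :
  in_translate h j p -> in_translate h' k p' -> d p p' < snd j -> step j k (mul (inv h) h').
Proof.
  unfold in_translate, step. intros Hp Hp' Hd. exists (act (inv h') p'). split.
  - rewrite d_sym, d_act_inv, d_sym. exact Hp'.
  - rewrite <- act_mul, <- massoc, minvr, mer, d_sym, d_act_inv, d_sym.
    pose proof (d_tri (act h (fst j)) p p'). lra.
Qed.

Fixpoint words (h0 : G) (steps : list G) (n : nat) : list G :=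
  match n with
  | O => [h0]
  | S n => flat_map (fun w => map (mul w) steps) (words h0 steps n)
  end.

Section Cover.
Variable cs : list (Y * R).
Hypothesis Hsmall : forall xr, In xr cs -> small_ball xr.
Hypothesis Hcover : forall p, exists xr h, In xr cs /\ in_translate h xr p.

Lemma orbit_cobounded (y : Y) : exists D, forall p, exists h, d p (act h y) <= D.
Proof.
  destruct (list_max cs (fun xr => snd xr + d (fst xr) y)) as [M HM].
  exists M. intros p. destruct (Hcover p) as [xr [h [Hin Hh]]]. exists h.
  unfold in_translate in Hh. pose proof (HM xr Hin) as HMxr. simpl in HMxr.
  pose proof (d_tri p (act h (fst xr)) (act h y)) as Htri. rewrite act_iso in Htri.
  rewrite d_sym in Hh. lra.
Qed.

Lemma steps_finite : exists Lt, forall j k s, In j cs -> In k cs -> step j k s -> In s Lt.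
Proof.
  destruct (fin_union cs (fun j s => exists k, In k cs /\ step j k s)) as [Lt HLt].
  - intros j Hj. destruct (fin_union cs (fun k s => step j k s)) as [L HL].
    + intros k Hk. apply steps_between_finite; auto.
    + exists L. intros s [k [Hk Hs]]. eapply HL; eauto.
  - exists Lt. intros j k s Hj Hk Hs. apply (HLt j Hj s). exists k; auto.
Qed.

Lemma chain_in_words Lt eps (x : nat -> Y) h0 j0 :
  (forall j k s, In j cs -> In k cs -> step j k s -> In s Lt) ->
  (forall xr, In xr cs -> eps <= snd xr) ->
  In j0 cs -> in_translate h0 j0 (x O) ->
  forall N, (forall k, (k < N)%nat -> d (x k) (x (S k)) < eps) ->
  exists h j, In j cs /\ in_translate h j (x N) /\ In h (words h0 Lt N).
Proof.
  intros HLt Heps Hj0 Hh0 N. induction N as [|N IH]; intros Hjump.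
  - exists h0, j0. split; [exact Hj0 | split; [exact Hh0 | left; reflexivity]].
  - destruct IH as [h [j [Hj [Hh Hw]]]]; [intros; apply Hjump; lia|].
    destruct (Hcover (x (S N))) as [j' [h' [Hj' Hh']]].
    exists h', j'. split; [exact Hj' | split; [exact Hh'|]].
    assert (Hclose : d (x N) (x (S N)) < snd j)
      by (eapply Rlt_le_trans; [apply Hjump; lia | apply Heps, Hj]).
    simpl. apply in_flat_map. exists h. split; [exact Hw|]. apply in_map_iff.
    exists (mul (inv h) h'). split.
    + rewrite massoc, minvr, mel. reflexivity.
    + eapply HLt; [exact Hj | exact Hj' | eapply step_of_close; eauto].
Qed.

(* Only finitely many group elements move y by at most K: cut the geodesic
   from y to g·y into pieces shorter than every cover radius and follow it
   through the covering translates. *)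
Lemma bounded_displacement_finite (y : Y) (K : R) :
  exists L, forall g, d y (act g y) <= K -> In g L.
Proof.
  destruct (list_min_pos cs snd) as [eps [Heps Hle]]; [intros xr Hxr; apply (Hsmall xr Hxr)|].
  destruct steps_finite as [Lt HLt].
  destruct (Hcover y) as [j0 [h0 [Hj0 Hh0]]].
  destruct (INR_archimed eps (Rabs K) Heps) as [N HN].
  assert (HN0 : (0 < N)%nat).
  { destruct N; [simpl in HN; pose proof (Rabs_pos K); lra | lia]. }
  pose proof (lt_0_INR _ HN0) as HNr.
  exists (flat_map (fun h => map (fun s => mul h (mul (inv s) (inv h0))) Lt) (words h0 Lt N)).
  intros g Hg. destruct (Hgeo y (act g y)) as [c Hc].
  destruct (chain_in_words Lt eps (fun k => c (INR k / INR N)) h0 j0 HLt Hle Hj0)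
    with (N := N) as [h [j [Hj [Hh Hw]]]].
  - simpl. replace (0 / INR N) with 0 by (field; lra). destruct Hc as [-> _]. exact Hh0.
  - intros k Hk. rewrite (geo_subdivision y (act g y) c N k Hc HN0 Hk).
    apply Rmult_lt_reg_l with (INR N); [lra|]. unfold Rdiv.
    rewrite <- Rmult_assoc, Rinv_r_simpl_m by lra. pose proof (Rle_abs K). lra.
  - simpl in Hh. replace (INR N / INR N) with 1 in Hh by (field; lra).
    destruct Hc as [_ [Hc1 _]]. rewrite Hc1 in Hh.
    assert (Hgy : in_translate (mul g h0) j0 (act g y))
      by (unfold in_translate in *; rewrite act_mul, act_iso; exact Hh0).
    assert (Hstep : step j0 j (mul (inv (mul g h0)) h)).
    { apply step_of_close with (act g y) (act g y); auto.
      rewrite d_refl. apply (Hsmall j0 Hj0). }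
    apply in_flat_map. exists h. split; [exact Hw|]. apply in_map_iff.
    exists (mul (inv (mul g h0)) h). split; [|apply (HLt j0 j); assumption].
    rewrite inv_mul, inv_inv, !massoc, minvr, mel, <- massoc, minvr, mer.
    reflexivity.
Qed.

End Cover.

Lemma orbit_dense (y : Y) : exists D, forall p, exists h, d p (act h y) <= D.
Proof.
  destruct small_ball_cover as [cs [Hsmall Hcover]].
  exact (orbit_cobounded cs Hcover y).
Qed.

Lemma orbit_finite (y : Y) (K : R) : exists L, forall g, d y (act g y) <= K -> In g L.
Proof.
  destruct small_ball_cover as [cs [Hsmall Hcover]].
  exact (bounded_displacement_finite cs Hsmall Hcover y K).
Qed.

(* If h⁻¹ a h moves y by a bounded amount, h lies boundedly close to Z(a):
   there are finitely many such conjugate lists, each realised by some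
   conjugator h' with h'·y near y, and h h'⁻¹ ∈ Z(a). *)
Lemma conjugator_near_centraliser a y K : exists M, forall h,
  (forall ai, In ai a -> d y (act (conj h ai) y) <= K) ->
  exists z, centralises a z /\ d (act h y) (act z y) <= M.
Proof.
  destruct (orbit_finite y K) as [L HL].
  destruct (bounded_realisers (lists_over L (length a)) (fun h c => map (conj h) a = c)
              (fun h => d (act h y) y)) as [M HM].
  exists M. intros h Hh.
  assert (Hin : In (map (conj h) a) (lists_over L (length a))).
  { rewrite <- (length_map (conj h) a). apply lists_over_in.
    intros x Hx. apply in_map_iff in Hx. destruct Hx as [ai [<- Hai]]. apply HL, Hh, Hai. }
  destruct (HM _ Hin h eq_refl) as [h' [Hsame Hh']].
  exists (mul h (inv h')). split; [apply centralises_quotient; auto|].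
  rewrite act_mul, act_iso, d_sym, d_act_inv, d_sym. exact Hh'.
Qed.

Lemma sublevel_near_centraliser a y m0 : exists M, forall p,
  displacement a p <= m0 -> exists z, centralises a z /\ d p (act z y) <= M.
Proof.
  destruct (orbit_dense y) as [D HD].
  destruct (conjugator_near_centraliser a y (2 * D + m0)) as [M HM].
  exists (D + M). intros p Hp. destruct (HD p) as [h Hh].
  destruct (HM h) as [z [Hz Hd]].
  - intros ai Hai. rewrite d_conj.
    pose proof (d_tri (act h y) p (act ai (act h y))) as Htri1.
    pose proof (d_tri p (act ai p) (act ai (act h y))) as Htri2.
    pose proof (displacement_term a ai p Hai).
    rewrite act_iso in Htri2. rewrite (d_sym (act h y) p) in Htri1. lra.
  - exists z. split; [exact Hz|]. pose proof (d_tri p (act h y) (act z y)). lra.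
Qed.

(* Convexity: if p is far from Z(a)·y compared with F_a(p), stepping from
   z·y towards p by a fixed length L stays in the sublevel {F_a ≤ F_a(y) + 1},
   which yields a point of Z(a)·y closer to p. *)
Lemma centraliser_descent a y : exists L, 0 < L /\ forall p z, centralises a z ->
  L * displacement a p + L < d p (act z y) ->
  exists z', centralises a z' /\ d p (act z' y) <= d p (act z y) - 2.
Proof.
  destruct (sublevel_near_centraliser a y (displacement a y + 1)) as [M HM].
  set (L := Rabs M + 2). pose proof (Rabs_pos M). pose proof (Rle_abs M).
  assert (HLpos : 0 < L) by (unfold L; lra).
  exists L. split; [exact HLpos|]. intros p z Hz Hfar.
  set (D0 := d p (act z y)) in *.
  pose proof (displacement_nonneg a p) as HFp.
  assert (HD0 : L < D0) by nra.
  destruct (Hgeo (act z y) p) as [c Hc].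
  set (t0 := L / D0).
  assert (Ht0 : 0 <= t0 <= 1).
  { unfold t0. split.
    - unfold Rdiv. apply Rmult_le_pos; [lra | left; apply Rinv_0_lt_compat; lra].
    - apply Rmult_le_reg_r with D0; [lra|]. unfold Rdiv.
      rewrite Rmult_assoc, Rinv_l by lra. lra. }
  assert (Hq_p : d (c t0) p = D0 - L).
  { rewrite (geo_to_end _ _ c t0 Hc Ht0), (d_sym (act z y) p). fold D0. unfold t0. field. lra. }
  assert (Hq_sub : displacement a (c t0) <= displacement a y + 1).
  { pose proof (displacement_convex a _ _ _ _ Hc Ht0) as Hcv.
    rewrite (displacement_centraliser a z y Hz) in Hcv.
    pose proof (displacement_nonneg a y).
    assert (Ht0F : t0 * displacement a p < 1).
    { unfold t0, Rdiv. rewrite Rmult_comm, <- Rmult_assoc.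
      apply Rmult_lt_reg_r with D0; [lra|]. rewrite Rmult_assoc, Rinv_l by lra. lra. }
    nra. }
  destruct (HM _ Hq_sub) as [z' [Hz' Hd']]. exists z'. split; [exact Hz'|].
  pose proof (d_tri p (c t0) (act z' y)). rewrite d_sym in Hq_p. unfold L in *. lra.
Qed.

(* Linear control of the distance to Z(a)·y by the displacement: iterate the
   descent, which cannot go on forever. *)
Lemma near_centraliser_linear a y : exists L, 0 < L /\ forall p,
  exists z, centralises a z /\ d p (act z y) <= L * displacement a p + L.
Proof.
  destruct (centraliser_descent a y) as [L [HL Hdesc]].
  exists L. split; [exact HL|]. intros p. apply NNPP. intros Hnone.
  assert (Hfar : forall z, centralises a z -> L * displacement a p + L < d p (act z y)).
  { intros z Hz. apply Rnot_le_lt. intros Hle. apply Hnone. eauto. }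
  assert (Hiter : forall n : nat, exists z, centralises a z /\ d p (act z y) <= d p y - 2 * INR n).
  { induction n as [|n [z [Hz Hd]]].
    - exists e. split; [apply centralises_e|]. rewrite act_e. simpl. lra.
    - destruct (Hdesc p z Hz (Hfar z Hz)) as [z' [Hz' Hd']].
      exists z'. split; [exact Hz'|]. rewrite S_INR. lra. }
  destruct (INR_archimed 2 (d p y) ltac:(lra)) as [n Hn].
  destruct (Hiter n) as [z [_ Hz]]. pose proof (d_nonneg p (act z y)). lra.
Qed.

Lemma bounded_conjugator (y : Y) (a : list G) :
  exists Cstar C : R, 0 <= Cstar /\ 0 <= C /\
    forall a' b' : list G,
      conj_lists G mul inv a a' -> conj_lists G mul inv a b' ->
      exists g : G, b' = map (conj g) a' /\
        dy G Y d act y g e <=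
          Cstar * sumR (map (fun p => dy G Y d act y (fst p) e + dy G Y d act y (snd p) e)
                            (combine a' b')) + C.
Proof.
  destruct (near_centraliser_linear a y) as [L [HL Hlin]].
  exists L, (2 * L). split; [lra | split; [lra|]].
  intros a' b' [h ->] [k ->].
  destruct (Hlin (act h y)) as [z0 [Hz0 Hd0]].
  destruct (Hlin (act k y)) as [z1 [Hz1 Hd1]].
  assert (Hz : centralises a (mul z0 (inv z1)))
    by (apply centralises_quotient; rewrite Hz0, Hz1; reflexivity).
  exists (mul (inv h) (mul (mul z0 (inv z1)) k)). split.
  - symmetry. apply conj_through_centraliser, Hz.
  - rewrite (sumR_combine (fun x => dy G Y d act y x e)) by (rewrite !length_map; reflexivity).
    rewrite <- !displacement_translate.
    unfold dy. rewrite act_e, act_mul, d_act_inv, !act_mul.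
    pose proof (d_tri (act z0 (act (inv z1) (act k y))) (act z0 y) (act h y)) as Htri.
    rewrite act_iso, d_act_inv, (d_sym (act z0 y) (act h y)), (d_sym (act k y)) in Htri.
    rewrite (d_sym (act k y)) in Hd1. lra.
Qed.

End HadamardAction.

Theorem lemma4 (Y : Type) (d : Y -> Y -> R)
  (G : Type) (mul : G -> G -> G) (inv : G -> G) (e : G) (act : G -> Y -> Y) (y : Y) :
  hadamard Y d -> locally_compact Y d ->
  is_group G mul inv e ->
  isometric_action G mul e Y d act ->
  proper_action G Y d act ->
  cocompact_action G Y d act ->
  forall a : list G,
    exists Cstar C : R, 0 <= Cstar /\ 0 <= C /\
      forall a' b' : list G,
        conj_lists G mul inv a a' -> conj_lists G mul inv a b' ->
        exists g : G, b' = map (conjg G mul inv g) a' /\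
          dy G Y d act y g e <=
            Cstar * sumR (map (fun p => dy G Y d act y (fst p) e + dy G Y d act y (snd p) e)
                              (combine a' b')) + C.
Proof.
  intros [Hmet [_ [Hgeo Hcat]]] _ Hgrp Hact Hprop Hcoc a.
  apply bounded_conjugator; assumption.
Qed.
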